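(* Let $U=(U_{ij})_{i,j=1}^M$, $U_{ij}\in M_M(\mathbb C)$, and $V=(V_{ab})_{a,b=1}^N$, $V_{ab}\in M_N(\mathbb C)$, be projective models, such that $U$ and $V'$ are positive. Let $Q\in M_{M\times N}(\mathbb T)$ and $W=U\otimes_QV$. Then for all integers $p,r\geq1$, $$|c_p^r(W)|\leq c_p^r(U)\,c_p^r(V).$$
   Context: A square matrix $(P_{ij})$ with entries in a $C^*$-algebra is magic if all $P_{ij}$ are orthogonal projections and each row and each column sums to $1$. For $U=(U_{ij})_{i,j=1}^n$ with $U_{ij}\in M_n(\mathbb C)$, define $U'=(U'_{kl})$ by $(U'_{kl})_{ij}=(U_{ij})_{kl}$. $U$ is a projective model if both $U$ and $U'$ are magic. $U$ is positive if $tr(U_{i_1j_1}\cdots U_{i_pj_p})\geq0$ for all $p$ and all indices, where $tr$ is the normalized trace on $M_n(\mathbb C)$. $T_p^U\in M_{n^p}(\mathbb C)$ has entries $(T_p^U)_{i_1\dots i_p,j_1\dots j_p}=tr(U_{i_1j_1}\cdots U_{i_pj_p})$, and $c_p^r(U)=Tr((T_p^U)^r)$ (non-normalized trace). The deformed tensor product $W=U\otimes_QV$ is the $MN\times MN$ matrix with entries in $M_{MN}(\mathbb C)$ given by $(W_{ia,jb})_{kc,ld}=\frac{Q_{ic}Q_{jd}}{Q_{id}Q_{jc}}(U_{ij})_{kl}(V_{ab})_{cd}$, $i,j,k,l\in\{1,\dots,M\}$, $a,b,c,d\in\{1,\dots,N\}$. *)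

From HB Require Import structures.
From mathcomp Require Import all_boot all_order all_algebra.
From mathcomp Require Import complex.
From mathcomp Require Import reals.
Set Implicit Arguments. Unset Strict Implicit. Unset Printing Implicit Defensive.
Import Order.TTheory GRing.Theory Num.Theory.
Local Open Scope ring_scope.
Local Open Scope complex_scope.

Section Defs.
Variable R : realType.
Local Notation C := R[i].

Definition adjmx (n : nat) (A : 'M[C]_n) : 'M[C]_n := \matrix_(i, j) (A j i)^*.

Definition is_orth_proj (n : nat) (P : 'M[C]_n) : Prop :=
  P *m P = P /\ adjmx P = P.

Definition magic (n d : nat) (P : 'I_n -> 'I_n -> 'M[C]_d) : Prop :=
  (forall i j, is_orth_proj (P i j)) /\
  (forall i, \sum_(j < n) P i j = 1%:M) /\
  (forall j, \sum_(i < n) P i j = 1%:M).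

Definition primemx (n : nat) (U : 'I_n -> 'I_n -> 'M[C]_n) : 'I_n -> 'I_n -> 'M[C]_n :=
  fun k l => \matrix_(i, j) (U i j) k l.

Definition projective_model (n : nat) (U : 'I_n -> 'I_n -> 'M[C]_n) : Prop :=
  magic U /\ magic (primemx U).

Definition ntr (n : nat) (A : 'M[C]_n) : C := \tr A / n%:R.

Definition wordmx (n p : nat) (U : 'I_n -> 'I_n -> 'M[C]_n)
  (i j : 'I_p -> 'I_n) : 'M[C]_n :=
  foldr (fun k (A : 'M[C]_n) => U (i k) (j k) *m A) 1%:M (enum 'I_p).

Definition positive_model (n : nat) (U : 'I_n -> 'I_n -> 'M[C]_n) : Prop :=
  forall (p : nat) (i j : 'I_p -> 'I_n), 0 <= ntr (wordmx U i j).

(* T_p^U, indexed by multi-indices {ffun 'I_p -> 'I_n} (via an enumeration) *)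
Definition Tmx (n p : nat) (U : 'I_n -> 'I_n -> 'M[C]_n) :
  'M[C]_#|{: {ffun 'I_p -> 'I_n}}| :=
  \matrix_(x, y) ntr (wordmx U (fun k => (enum_val x : {ffun 'I_p -> 'I_n}) k)
                           (fun k => (enum_val y : {ffun 'I_p -> 'I_n}) k)).

(* c_p^r(U) = Tr((T_p^U)^r), non-normalized trace *)
Definition cpr (n : nat) (U : 'I_n -> 'I_n -> 'M[C]_n) (p r : nat) : C :=
  \tr ((Tmx p U) ^+ r).

Definition unpair (M N : nat) (x : 'I_(M * N)) : 'I_M * 'I_N :=
  enum_val (cast_ord (esym (mxvec_cast M N)) x).

Definition deformed_tensor (M N : nat) (Q : 'M[C]_(M, N))
  (U : 'I_M -> 'I_M -> 'M[C]_M) (V : 'I_N -> 'I_N -> 'M[C]_N) :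
  'I_(M * N) -> 'I_(M * N) -> 'M[C]_(M * N) :=
  fun ia jb => \matrix_(kc, ld)
    let: (i, a) := unpair ia in let: (j, b) := unpair jb in
    let: (k, c) := unpair kc in let: (l, d) := unpair ld in
    (Q i c * Q j d) / (Q i d * Q j c) * (U i j) k l * (V a b) c d.

End Defs.

(* Expanding Tr((T_p^W)^r) along closed walks of multi-indices, every step
   splits into a U-factor and a V-factor twisted by the unimodular ratios
   Q_ic Q_jd / (Q_id Q_jc).  For a fixed U-walk the U-factors multiply to a
   nonnegative weight, by positivity of U.  Expanding the twisted V-part once
   more along the closed walks inside the traces of V-words, and exchanging the
   roles of walk steps and word positions, it becomes a sum of unimodular phases
   times products of traces of words in V', which are nonnegative by positivity
   of V'.  The triangle inequality bounds its modulus by the same sum without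
   phases, which is c_p^r(V); summing over the U-walks gives c_p^r(U) c_p^r(V). *)

From HB Require Import structures.
From mathcomp Require Import all_boot all_order all_algebra.
From mathcomp Require Import complex.
From mathcomp Require Import reals.
From mathcomp Require Import ring.
Set Implicit Arguments. Unset Strict Implicit. Unset Printing Implicit Defensive.
Import Order.TTheory GRing.Theory Num.Theory.
Local Open Scope ring_scope.
Local Open Scope complex_scope.

(* Step t of a walk y : {ffun 'I_r.+1 -> I} goes from y (src t) to y (dst t). *)
Local Notation src t := (widen_ord (leqnSn _) t).
Local Notation dst t := (lift ord0 t).

Section ClosedWalks.
Variable K : comPzRingType.

Lemma sum_delta (J : finType) (a : J) (F : J -> K) :
  \sum_j (j == a)%:R * F j = F a.
Proof.
rewrite (bigD1 a) //= eqxx mul1r big1 ?addr0 // => j /negPf ->.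
by rewrite mul0r.
Qed.

Definition ffun_cons (J : finType) n (j : J) (x : {ffun 'I_n -> J}) :
  {ffun 'I_n.+1 -> J} :=
  [ffun k => if unlift ord0 k is Some k' then x k' else j].

Lemma ffun_cons0 (J : finType) n (j : J) x : @ffun_cons J n j x ord0 = j.
Proof. by rewrite ffunE unlift_none. Qed.

Lemma ffun_consS (J : finType) n (j : J) x k : @ffun_cons J n j x (dst k) = x k.
Proof. by rewrite ffunE liftK. Qed.

Lemma sum_ffun_cons (J : finType) n (F : {ffun 'I_n.+1 -> J} -> K) :
  \sum_x F x = \sum_(j : J) \sum_(x : {ffun 'I_n -> J}) F (ffun_cons j x).
Proof.
pose tail (x : {ffun 'I_n.+1 -> J}) := (x ord0, [ffun k => x (dst k)]).
have consK : cancel (fun jx => ffun_cons jx.1 jx.2) tail.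
  by case=> j x; rewrite /tail ffun_cons0; congr (_, _); apply/ffunP => k;
     rewrite ffunE ffun_consS.
have tailK : cancel tail (fun jx => ffun_cons jx.1 jx.2).
  move=> x; apply/ffunP => k; rewrite ffunE; case: unliftP => [k'|] -> //=.
  by rewrite ffunE.
rewrite pair_big (reindex _ (onW_bij _ (Bijective consK tailK))).
by apply: eq_bigr.
Qed.

Definition mxprod m r (B : 'I_r -> 'M[K]_m) : 'M[K]_m :=
  foldr (fun k A => B k *m A) 1%:M (enum 'I_r).

Lemma mxprod_cst m r (A : 'M[K]_m) : mxprod (fun _ : 'I_r => A) = A ^+ r.
Proof.
rewrite /mxprod -[r in A ^+ r]size_enum_ord.
by elim: (enum 'I_r) => [|k s IH] /=; rewrite ?expr0 // exprS IH mulmxE.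
Qed.

Lemma mxprodS m r (B : 'I_r.+1 -> 'M[K]_m) :
  mxprod B = B ord0 *m mxprod (fun t => B (dst t)).
Proof. by rewrite /mxprod enum_ordSl /= foldr_map. Qed.

Lemma mxprodE m r (B : 'I_r -> 'M[K]_m) (u v : 'I_m) :
  mxprod B u v =
  \sum_(y : {ffun 'I_r.+1 -> 'I_m}) (y ord0 == u)%:R * (y ord_max == v)%:R *
     \prod_(t < r) B t (y (src t)) (y (dst t)).
Proof.
elim: r B u v => [|r IH] B u v.
  rewrite /mxprod enum_ord0 /= mxE sum_ffun_cons.
  have -> : (ord_max : 'I_1) = ord0 by apply: val_inj.
  under eq_bigr => j _ do under eq_bigr do rewrite ffun_cons0 big_ord0 mulr1.
  under eq_bigr do rewrite sumr_const card_ffun !card_ord expn0 mulr1n.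
  by rewrite sum_delta.
have max_dst : (ord_max : 'I_r.+2) = dst (ord_max : 'I_r.+1) by apply: val_inj.
have src_dst (t : 'I_r) : src (dst t) = dst (src t) :> 'I_r.+2 by apply: val_inj.
have src0 : src ord0 = ord0 :> 'I_r.+2 by apply: val_inj.
rewrite mxprodS mxE.
under eq_bigr => w _ do rewrite IH big_distrr.
rewrite exchange_big [RHS]sum_ffun_cons [RHS]exchange_big /=.
apply: eq_bigr => y _.
under [RHS]eq_bigr => j _ do
  rewrite ffun_cons0 max_dst ffun_consS big_ord_recl src0 ffun_consS ffun_cons0.
under [RHS]eq_bigr => j _ do under eq_bigr => t _ do rewrite src_dst !ffun_consS.
set P := \prod_(t < r) _.
rewrite (eq_bigr (fun w => (w == y ord0)%:R * (B ord0 u w * ((y ord_max == v)%:R * P))));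
  last by move=> w _; rewrite (eq_sym w); ring.
rewrite [RHS](eq_bigr (fun j => (j == u)%:R * (B ord0 j (y ord0) * ((y ord_max == v)%:R * P))));
  last by move=> j _; ring.
by rewrite !sum_delta.
Qed.

Definition cyclesum (I : finType) r (f : 'I_r -> I -> I -> K) : K :=
  \sum_(y : {ffun 'I_r.+1 -> I}) (y ord0 == y ord_max)%:R *
     \prod_(t < r) f t (y (src t)) (y (dst t)).

Lemma eq_cyclesum (I : finType) r (f g : 'I_r -> I -> I -> K) :
  (forall t x y, f t x y = g t x y) -> cyclesum f = cyclesum g.
Proof.
move=> fg; apply: eq_bigr => y _; congr (_ * _).
by apply: eq_bigr => t _; apply: fg.
Qed.

Lemma mxtrace_mxprod m r (B : 'I_r -> 'M[K]_m) :
  \tr (mxprod B) = cyclesum (fun t x y => B t x y).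
Proof.
rewrite /mxtrace; under eq_bigr do rewrite mxprodE.
rewrite exchange_big /=; apply: eq_bigr => y _.
set P := \prod_(t < r) _.
rewrite (eq_bigr (fun u => (u == y ord0)%:R * ((y ord_max == u)%:R * P)));
  last by move=> u _; rewrite (eq_sym u); ring.
by rewrite sum_delta eq_sym.
Qed.

Lemma mxtrace_exp m r (A : 'M[K]_m) :
  \tr (A ^+ r) = cyclesum (fun (_ : 'I_r) x y => A x y).
Proof. by rewrite -mxprod_cst mxtrace_mxprod. Qed.

Lemma cyclesum_reindex (I J : finType) (h : I -> J) (g : J -> I) :
  cancel h g -> cancel g h -> forall r (f : 'I_r -> J -> J -> K),
  cyclesum (fun t x y => f t (h x) (h y)) = cyclesum f.
Proof.
move=> hK gK r f; pose hy (y : {ffun 'I_r.+1 -> I}) := [ffun k => h (y k)].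
pose gy (y : {ffun 'I_r.+1 -> J}) := [ffun k => g (y k)].
have hyK : cancel hy gy by move=> y; apply/ffunP => k; rewrite !ffunE hK.
have gyK : cancel gy hy by move=> y; apply/ffunP => k; rewrite !ffunE gK.
rewrite [RHS](reindex hy (onW_bij _ (Bijective hyK gyK))).
apply: eq_bigr => y _; rewrite !ffunE (inj_eq (can_inj hK)); congr (_ * _).
by apply: eq_bigr => t _; rewrite !ffunE.
Qed.

Lemma cyclesum_pair (I J : finType) r (f : 'I_r -> I * J -> I * J -> K) :
  cyclesum f = \sum_(yi : {ffun 'I_r.+1 -> I}) \sum_(yj : {ffun 'I_r.+1 -> J})
    (yi ord0 == yi ord_max)%:R * (yj ord0 == yj ord_max)%:R *
    \prod_(t < r) f t (yi (src t), yj (src t)) (yi (dst t), yj (dst t)).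
Proof.
pose zip (y : {ffun 'I_r.+1 -> I} * {ffun 'I_r.+1 -> J}) := [ffun k => (y.1 k, y.2 k)].
pose unzip (y : {ffun 'I_r.+1 -> I * J}) := ([ffun k => (y k).1], [ffun k => (y k).2]).
have zipK : cancel zip unzip.
  by case=> yi yj; congr (_, _); apply/ffunP => k; rewrite !ffunE.
have unzipK : cancel unzip zip.
  by move=> y; apply/ffunP => k; rewrite !ffunE; case: (y k).
rewrite pair_big /= /cyclesum (reindex zip (onW_bij _ (Bijective zipK unzipK))).
apply: eq_bigr => -[yi yj] _; rewrite !ffunE xpair_eqE -natrM mulnb; congr (_ * _).
by apply: eq_bigr => t _; rewrite !ffunE.
Qed.

Lemma natr_eq_ffun (I J : finType) (f g : {ffun I -> J}) :
  (f == g)%:R = \prod_i (f i == g i)%:R :> K.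
Proof.
have [->|neq_fg] := eqVneq; first by rewrite big1 // => i _; rewrite eqxx.
have [i neq_i|eq_fg] := pickP (fun i => f i != g i).
  by rewrite (bigD1 i) //= (negPf neq_i) mul0r.
by case/eqP: neq_fg; apply/ffunP => i; apply/eqP/negbFE/eq_fg.
Qed.

Lemma sum_ffun_transpose (I J L : finType) (F : {ffun I -> {ffun J -> L}} -> K) :
  \sum_x F x = \sum_(w : {ffun J -> {ffun I -> L}}) F [ffun i => [ffun j => w j i]].
Proof.
pose tr (w : {ffun J -> {ffun I -> L}}) := [ffun i => [ffun j => w j i]].
pose tr' (x : {ffun I -> {ffun J -> L}}) := [ffun j => [ffun i => x i j]].
have trK : cancel tr tr' by move=> w; apply/ffunP => j; apply/ffunP => i; rewrite !ffunE.
have trK' : cancel tr' tr by move=> x; apply/ffunP => i; apply/ffunP => j; rewrite !ffunE.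
by rewrite (reindex tr (onW_bij _ (Bijective trK trK'))).
Qed.

End ClosedWalks.

Section Models.
Variable R : realType.
Local Notation C := R[i].

Lemma cpr_cyclesum n (U : 'I_n -> 'I_n -> 'M[C]_n) p r :
  cpr U p r =
  cyclesum (fun (_ : 'I_r) (a b : {ffun 'I_p -> 'I_n}) => ntr (wordmx U a b)).
Proof.
rewrite /cpr mxtrace_exp -[RHS](cyclesum_reindex enum_valK enum_rankK).
by apply: eq_cyclesum => t x y; rewrite mxE.
Qed.

Lemma ntr_wordmx n (U : 'I_n -> 'I_n -> 'M[C]_n) p (i j : 'I_p -> 'I_n) :
  ntr (wordmx U i j) = n%:R^-1 * cyclesum (fun s (x y : 'I_n) => U (i s) (j s) x y).
Proof. by rewrite /ntr (mxtrace_mxprod (fun s => U (i s) (j s))) mulrC. Qed.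

Lemma mxtrace_ge0 n (A : 'M[C]_n) : 0 <= ntr A -> 0 <= \tr A.
Proof.
case: n A => [|n] A; first by rewrite /mxtrace big_ord0.
have n1_neq0 : (n.+1%:R : C) != 0 by rewrite pnatr_eq0.
by move=> ntrA_ge0; rewrite -(divfK n1_neq0 (\tr A)) mulr_ge0 ?ler0n.
Qed.

Section DeformedTensor.
Variables (M N : nat) (U : 'I_M -> 'I_M -> 'M[C]_M) (V : 'I_N -> 'I_N -> 'M[C]_N).
Variables (Q : 'M[C]_(M, N)) (p r : nat).

Definition pair_ord (q : 'I_M * 'I_N) : 'I_(M * N) :=
  cast_ord (mxvec_cast M N) (enum_rank q).

Lemma pair_ordK : cancel pair_ord (@unpair M N).
Proof. by move=> q; rewrite /unpair /pair_ord cast_ordK enum_rankK. Qed.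

Lemma unpairK : cancel (@unpair M N) pair_ord.
Proof. by move=> x; rewrite /unpair /pair_ord enum_valK cast_ordKV. Qed.

Definition pair_mindex (ab : {ffun 'I_p -> 'I_M} * {ffun 'I_p -> 'I_N}) :
  {ffun 'I_p -> 'I_(M * N)} := [ffun s => pair_ord (ab.1 s, ab.2 s)].

Definition unpair_mindex (w : {ffun 'I_p -> 'I_(M * N)}) :=
  ([ffun s => (unpair (w s)).1], [ffun s => (unpair (w s)).2]).

Lemma pair_mindexK : cancel pair_mindex unpair_mindex.
Proof.
by case=> a b; congr (_, _); apply/ffunP => s; rewrite !ffunE pair_ordK.
Qed.

Lemma unpair_mindexK : cancel unpair_mindex pair_mindex.
Proof.
move=> w; apply/ffunP => s; rewrite !ffunE /=.
by case E: (unpair (w s)) => [x y] /=; rewrite -E unpairK.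
Qed.

Definition qratio (i j : 'I_M) (c d : 'I_N) : C := Q i c * Q j d / (Q i d * Q j c).

Definition twisted_ntr (a a' : {ffun 'I_p -> 'I_M}) (b b' : {ffun 'I_p -> 'I_N}) : C :=
  N%:R^-1 * cyclesum (fun s c d => qratio (a s) (a' s) c d * V (b s) (b' s) c d).

Lemma ntr_wordmx_deformed a a' b b' :
  ntr (wordmx (deformed_tensor Q U V) (pair_mindex (a, b)) (pair_mindex (a', b'))) =
  ntr (wordmx U a a') * twisted_ntr a a' b b'.
Proof.
rewrite !ntr_wordmx -(cyclesum_reindex pair_ordK unpairK) cyclesum_pair.
under eq_bigr => ya _ do under eq_bigr => yb _ do under eq_bigr => t _ do
  rewrite /deformed_tensor mxE !ffunE !pair_ordK /= mulrAC.
under eq_bigr => ya _ do under eq_bigr => yb _ do rewrite big_split.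
rewrite /twisted_ntr /cyclesum natrM invfM [RHS]mulrACA big_distrl /=.
congr (_ * _); apply: eq_bigr => ya _; rewrite big_distrr /=.
by apply: eq_bigr => yb _; rewrite /qratio; ring.
Qed.

Lemma norm_qratio i j c d :
  (forall i c, `|Q i c| = 1) -> `|qratio i j c d| = 1.
Proof. by move=> normQ; rewrite normf_div !normrM !normQ !mulr1 divr1. Qed.

Definition twisted_cpr (psi : 'I_r -> 'I_p -> 'I_N -> 'I_N -> C) : C :=
  cyclesum (fun t (b b' : {ffun 'I_p -> 'I_N}) =>
    N%:R^-1 * cyclesum (fun s c d => psi t s c d * V (b s) (b' s) c d)).

Lemma cpr_deformed :
  cpr (deformed_tensor Q U V) p r =
  \sum_(ya : {ffun 'I_r.+1 -> {ffun 'I_p -> 'I_M}})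
    (ya ord0 == ya ord_max)%:R *
    \prod_(t < r) ntr (wordmx U (ya (src t)) (ya (dst t))) *
    twisted_cpr (fun t s => qratio (ya (src t) s) (ya (dst t) s)).
Proof.
rewrite cpr_cyclesum -(cyclesum_reindex pair_mindexK unpair_mindexK) cyclesum_pair.
apply: eq_bigr => ya _; rewrite /twisted_cpr /cyclesum big_distrr.
apply: eq_bigr => yb _ /=; under eq_bigr do rewrite ntr_wordmx_deformed.
by rewrite big_split /= mulrACA.
Qed.

Lemma twisted_cpr1 : twisted_cpr (fun _ _ _ _ => 1) = cpr V p r.
Proof.
rewrite cpr_cyclesum; apply: eq_cyclesum => t b b'; rewrite ntr_wordmx.
by congr (_ * _); apply: eq_cyclesum => s c d; rewrite mul1r.
Qed.

(* Reading the closed V-walks position by position instead of step by step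
   turns products of entries of V into traces of words in V'. *)
Lemma sum_walks_primemx (kk : {ffun 'I_r -> {ffun 'I_p.+1 -> 'I_N}}) :
  \sum_(yb : {ffun 'I_r.+1 -> {ffun 'I_p -> 'I_N}}) (yb ord0 == yb ord_max)%:R *
    \prod_(t < r) \prod_(s < p)
      V (yb (src t) s) (yb (dst t) s) (kk t (src s)) (kk t (dst s)) =
  \prod_(s < p) \tr (wordmx (primemx V) (fun t => kk t (src s)) (fun t => kk t (dst s))).
Proof.
under [RHS]eq_bigr do rewrite (mxtrace_mxprod (fun t => primemx V _ _)).
rewrite bigA_distr_bigA /= [LHS]sum_ffun_transpose; apply: eq_bigr => w _.
rewrite natr_eq_ffun exchange_big /= -big_split /=.
apply: eq_bigr => s _; rewrite !ffunE; congr (_ * _).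
by apply: eq_bigr => t _; rewrite !ffunE mxE.
Qed.

Definition walk_phase (psi : 'I_r -> 'I_p -> 'I_N -> 'I_N -> C)
    (kk : {ffun 'I_r -> {ffun 'I_p.+1 -> 'I_N}}) : C :=
  \prod_(t < r) \prod_(s < p) psi t s (kk t (src s)) (kk t (dst s)).

Definition walk_weight (kk : {ffun 'I_r -> {ffun 'I_p.+1 -> 'I_N}}) : C :=
  \prod_(t < r) (N%:R^-1 * (kk t ord0 == kk t ord_max)%:R) *
  \prod_(s < p) \tr (wordmx (primemx V) (fun t => kk t (src s)) (fun t => kk t (dst s))).

Lemma twisted_cprE psi :
  twisted_cpr psi = \sum_kk walk_phase psi kk * walk_weight kk.
Proof.
rewrite /twisted_cpr /cyclesum.
under eq_bigr => yb _ do under eq_bigr => t _ do rewrite big_distrr /=.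
under eq_bigr => yb _ do rewrite bigA_distr_bigA /= big_distrr /=.
rewrite exchange_big /=; apply: eq_bigr => kk _.
rewrite /walk_weight -sum_walks_primemx !big_distrr /=; apply: eq_bigr => yb _.
under eq_bigr => t _ do rewrite big_split !mulrA.
by rewrite !big_split /walk_phase /=; ring.
Qed.

Lemma walk_weight_ge0 kk : positive_model (primemx V) -> 0 <= walk_weight kk.
Proof.
move=> posV; apply: mulr_ge0.
  by apply: prodr_ge0 => t _; rewrite mulr_ge0 ?invr_ge0 ?ler0n.
by apply: prodr_ge0 => s _; apply/mxtrace_ge0/posV.
Qed.

Lemma norm_twisted_cpr_le psi :
  positive_model (primemx V) -> (forall t s c d, `|psi t s c d| = 1) ->
  `|twisted_cpr psi| <= cpr V p r.
Proof.
move=> posV normpsi; rewrite -twisted_cpr1 !twisted_cprE.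
apply: le_trans (ler_norm_sum _ _ _) _; apply: ler_sum => kk _.
have normphase : `|walk_phase psi kk| = 1.
  rewrite /walk_phase normr_prod big1 // => t _.
  by rewrite normr_prod big1 // => s _; apply: normpsi.
have phase1 : walk_phase (fun _ _ _ _ => 1) kk = 1.
  by rewrite /walk_phase big1 // => t _; rewrite big1.
by rewrite normrM normphase phase1 !mul1r ger0_norm ?(walk_weight_ge0 kk posV).
Qed.

End DeformedTensor.
End Models.

Theorem theorem2p9 (R : realType) (M N : nat)
  (U : 'I_M -> 'I_M -> 'M[R[i]]_M) (V : 'I_N -> 'I_N -> 'M[R[i]]_N)
  (Q : 'M[R[i]]_(M, N)) :
  projective_model U -> projective_model V ->
  positive_model U -> positive_model (primemx V) ->
  (forall i c, `|Q i c| = 1) ->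
  forall p r : nat, (0 < p)%N -> (0 < r)%N ->
    `|cpr (deformed_tensor Q U V) p r| <= cpr U p r * cpr V p r.
Proof.
move=> _ _ posU posV normQ p r _ _.
rewrite cpr_deformed (cpr_cyclesum U) /cyclesum big_distrl /=.
apply: le_trans (ler_norm_sum _ _ _) _; apply: ler_sum => ya _.
have weightU_ge0 : 0 <= (ya ord0 == ya ord_max)%:R *
    \prod_(t < r) ntr (wordmx U (ya (src t)) (ya (dst t))).
  by rewrite mulr_ge0 ?ler0n //; apply: prodr_ge0 => t _; apply: posU.
rewrite normrM (ger0_norm weightU_ge0) ler_wpM2l //.
by apply: norm_twisted_cpr_le => // t s c d; apply: norm_qratio.
Qed.
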